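(* In the LSM/LOOLSM setting of the context, for every exercise index $i$ and path $n$, the path-wise look-ahead bias satisfies $$\hat B^{[i]}_n\le I\Big[\,|\hat C^{[i]}_n-Z^{[i]}_n|\le h_n\,|V^{[i+1]}_n-Z^{[i]}_n|\,\Big]\;|V^{[i+1]}_n-Z^{[i]}_n|.$$
   Context: $N$ paths are simulated. At exercise time $t_i$ we are given: - discounted payouts $Z^{[i]}_n$; - next-step path-wise option values $V^{[i+1]}_n$; - an $N\times M$ regressor matrix $X$ of full rank with rows $x_n$. Let $H=X(X^\top X)^{-1}X^\top$ and let $h_n=x_n(X^\top X)^{-1}x_n^\top$ be the leverage, with $h_n<1$. Define: - the LSM continuation estimate $\hat C^{[i]}=HV^{[i+1]}$; - the leave-one-out estimate $\hat C'^{[i]}_n=\hat C^{[i]}_n-\dfrac{h_n(V^{[i+1]}_n-\hat C^{[i]}_n)}{1-h_n}$. The LSM update is $I[\hat C^{[i]}_n\ge Z^{[i]}_n](V^{[i+1]}_n-Z^{[i]}_n)+Z^{[i]}_n$, and the LOOLSM update is the same with $\hat C'^{[i]}_n$ in place of $\hat C^{[i]}_n$. The path-wise look-ahead bias is their difference: $$\hat B^{[i]}_n=\big(I[Z^{[i]}_n\le\hat C^{[i]}_n]-I[Z^{[i]}_n\le\hat C'^{[i]}_n]\big)(V^{[i+1]}_n-Z^{[i]}_n).$$ $I[\cdot]$ denotes the indicator function. *)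

From mathcomp Require Import all_boot all_order all_algebra.
Set Implicit Arguments. Unset Strict Implicit. Unset Printing Implicit Defensive.
Import Order.TTheory GRing.Theory Num.Theory.
Local Open Scope ring_scope.

Definition ind (R : ringType) (b : bool) : R := (b : nat)%:R.

Section LSM.
Variables (R : realFieldType) (N M : nat).

Definition hatmx (X : 'M[R]_(N, M)) : 'M[R]_N :=
  X *m invmx (X^T *m X) *m X^T.

Definition leverage (X : 'M[R]_(N, M)) (n : 'I_N) : R :=
  (row n X *m invmx (X^T *m X) *m (row n X)^T) 0 0.

Definition lsm_C (X : 'M[R]_(N, M)) (V : 'cV[R]_N) (n : 'I_N) : R :=
  (hatmx X *m V) n 0.

Definition loo_C (X : 'M[R]_(N, M)) (V : 'cV[R]_N) (n : 'I_N) : R :=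
  lsm_C X V n - leverage X n * (V n 0 - lsm_C X V n) / (1 - leverage X n).

Definition lookahead_bias (X : 'M[R]_(N, M)) (Z V : 'cV[R]_N) (n : 'I_N) : R :=
  (ind R (Z n 0 <= lsm_C X V n) - ind R (Z n 0 <= loo_C X V n))
  * (V n 0 - Z n 0).
End LSM.

From mathcomp Require Import all_boot all_order all_algebra.
From mathcomp Require Import ring.
Set Implicit Arguments. Unset Strict Implicit. Unset Printing Implicit Defensive.
Import Order.TTheory GRing.Theory Num.Theory.
Local Open Scope ring_scope.

(* Writing x = C - Z and y = V - Z, the leave-one-out estimate satisfies
   C' - Z = (x - h y) / (1 - h), so for h < 1 the LOOLSM exercises iff
   h y <= x while LSM exercises iff 0 <= x.  The two decisions differ only
   when x lies between 0 and h y, which forces |x| <= h |y|; the bias is then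
   +-y, hence at most |y|, and when it is positive the indicator is 1. *)

Lemma loo_estimate_subE (R : fieldType) (c z v h : R) : h != 1 ->
  c - h * (v - c) / (1 - h) - z = (c - z - h * (v - z)) / (1 - h).
Proof. by move=> h_neq1; field; rewrite subr_eq0 eq_sym. Qed.

Lemma le_loo_estimate (R : realFieldType) (c z v h : R) : h < 1 ->
  (z <= c - h * (v - c) / (1 - h)) = (h * (v - z) <= c - z).
Proof.
move=> lth1; have gt0_1h : 0 < 1 - h by rewrite subr_gt0.
rewrite -subr_ge0 loo_estimate_subE ?lt_eqF //.
by rewrite pmulr_lge0 ?invr_gt0 // subr_ge0.
Qed.

Lemma ind_gap_mul_le_norm (R : realDomainType) (a b : bool) (y : R) :
  (ind R a - ind R b) * y <= `|y|.
Proof.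
rewrite /ind; case: a; case: b => /=;
  rewrite ?subrr ?mul0r ?subr0 ?sub0r ?mul1r ?mulN1r //.
- exact: ler_norm.
- by rewrite -normrN ler_norm.
Qed.

Lemma ind_gap_mul_gt0 (R : realDomainType) (h x y : R) :
  0 < (ind R (0 <= x) - ind R (h * y <= x)) * y -> `|x| <= h * `|y|.
Proof.
rewrite /ind; case: (lerP 0 x) => [x_ge0|x_lt0]; case: (lerP (h * y) x) => hy_x;
  rewrite /= ?subrr ?mul0r ?ltxx // ?subr0 ?sub0r ?mul1r ?mulN1r => bias_gt0.
- by rewrite ger0_norm // gtr0_norm //; apply: ltW.
- by rewrite ltr0_norm // ltr0_norm -?oppr_gt0 // mulrN lerN2.
Qed.

Lemma ind_gap_mul_le (R : realDomainType) (h x y : R) :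
  (ind R (0 <= x) - ind R (h * y <= x)) * y <= ind R (`|x| <= h * `|y|) * `|y|.
Proof.
have [bias_le0|bias_gt0] := lerP ((ind R (0 <= x) - ind R (h * y <= x)) * y) 0.
  by apply: le_trans bias_le0 _; rewrite /ind mulr_ge0.
by rewrite /ind (ind_gap_mul_gt0 bias_gt0) mul1r ind_gap_mul_le_norm.
Qed.

(* One exercise time t_i: Z = Z^{[i]}, V = V^{[i+1]}, X the regressors. *)
Theorem lemmaA1 (R : realFieldType) (N M : nat) (X : 'M[R]_(N, M))
  (Z V : 'cV[R]_N) :
  \rank X = M ->
  (forall n : 'I_N, leverage X n < 1) ->
  forall n : 'I_N,
    lookahead_bias X Z V n <=
    ind R (`|lsm_C X V n - Z n 0| <= leverage X n * `|V n 0 - Z n 0|)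
    * `|V n 0 - Z n 0|.
Proof.
move=> _ lt_lev1 n.
rewrite /lookahead_bias /loo_C le_loo_estimate // -[Z n 0 <= _]subr_ge0.
exact: ind_gap_mul_le.
Qed.
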